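(* Let $\mathcal{B}$ be a smooth real Banach space with dual $\mathcal{B}^*$, let $\nu_j\in\mathcal{B}^*$, $j\in\mathbb{N}_m$, be linearly independent and let $\mathbf{y}\in\mathbb{R}^m$. Then $\hat f\in\mathcal{B}$ is a solution of the minimum norm interpolation problem with data $\mathbf{y}$ if and only if $\hat f\in\mathcal{M}_{\mathbf{y}}$ and there exist $c_j\in\mathbb{R}$, $j\in\mathbb{N}_m$, such that $\mathcal{G}(\hat f)=\sum_{j\in\mathbb{N}_m}c_j\nu_j$.
   Context: $\mathcal{B}$ is a real Banach space with dual $\mathcal{B}^*$ and pairing $\langle\nu,f\rangle_{\mathcal{B}}:=\nu(f)$; $\mathbb{N}_m:=\{1,\dots,m\}$; $\mathcal{L}(f):=[\langle\nu_j,f\rangle_{\mathcal{B}}:j\in\mathbb{N}_m]$, $\mathcal{M}_{\mathbf{y}}:=\{f\in\mathcal{B}:\mathcal{L}(f)=\mathbf{y}\}$; a solution of the minimum norm interpolation problem with data $\mathbf{y}$ is an $\hat f\in\mathcal{M}_{\mathbf{y}}$ with $\|\hat f\|_{\mathcal{B}}=\inf\{\|f\|_{\mathcal{B}}:f\in\mathcal{M}_{\mathbf{y}}\}$. The norm is Gâteaux differentiable at $f\neq0$ if for all $h\in\mathcal{B}$ the limit $\lim_{t\to0}(\|f+th\|_{\mathcal{B}}-\|f\|_{\mathcal{B}})/t$ exists; then $\mathcal{G}(f)\in\mathcal{B}^*$ denotes the functional with $\langle\mathcal{G}(f),h\rangle_{\mathcal{B}}$ equal to this limit (the Gâteaux derivative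 of the norm at $f$). By convention $\mathcal{G}(0):=0$. $\mathcal{B}$ is smooth if its norm is Gâteaux differentiable at every nonzero $f$. *)

From HB Require Import structures.
From mathcomp Require Import all_boot all_order all_algebra.
From mathcomp Require Import all_classical all_reals all_analysis.
Set Implicit Arguments. Unset Strict Implicit. Unset Printing Implicit Defensive.
Import Order.TTheory GRing.Theory Num.Theory.
Import numFieldNormedType.Exports.
Local Open Scope classical_set_scope.
Local Open Scope ring_scope.

Definition norm_dq {R : realType} {B : normedModType R} (f h : B) (t : R) : R :=
  (`|f + t *: h| - `|f|) / t.

Definition gateaux_diff_at {R : realType} {B : normedModType R} (f : B) : Prop :=
  forall h : B, cvg (norm_dq f h @ 0^').

Definition smooth_space (R : realType) (B : normedModType R) : Prop :=
  forall f : B, f != 0 -> gateaux_diff_at f.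

(* Gateaux derivative G(f) of the norm, as a functional B -> R;
   convention G(0) = 0. *)
Definition gateaux_G {R : realType} {B : normedModType R} (f : B) : B -> R :=
  fun h => if f == 0 then 0 else lim (norm_dq f h @ 0^').

Definition is_dual_elt {R : realType} {B : normedModType R} (nu : B -> R) : Prop :=
  (forall (a : R) (x y : B), nu (a *: x + y) = a * nu x + nu y) /\ continuous nu.

Definition lin_indep_fun {R : realType} {B : normedModType R} (m : nat)
  (nu : 'I_m -> B -> R) : Prop :=
  forall c : 'I_m -> R, (forall f : B, \sum_(j < m) c j * nu j f = 0) ->
    forall j, c j = 0.

Definition M_y {R : realType} {B : normedModType R} (m : nat)
  (nu : 'I_m -> B -> R) (y : 'I_m -> R) : set B :=
  [set f | forall j, nu j f = y j].

Definition mni_solution {R : realType} {B : normedModType R} (m : nat)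
  (nu : 'I_m -> B -> R) (y : 'I_m -> R) (fhat : B) : Prop :=
  M_y nu y fhat /\ `|fhat| = inf [set `|f| | f in M_y nu y].

From HB Require Import structures.
From mathcomp Require Import all_boot all_order all_algebra.
From mathcomp Require Import all_classical all_reals all_analysis.
From mathcomp Require Import ring lra.
Import Order.TTheory GRing.Theory Num.Theory.
Import numFieldNormedType.Exports.
Local Open Scope classical_set_scope.
Local Open Scope ring_scope.

(* Two facts about the Gateaux derivative G(f) of the norm drive the proof.
   First, convexity of t |-> |f + t h| makes its difference quotients
   monotone, so the derivative is squeezed between left and right quotients;
   this shows that G(f) is a linear form and a subgradient of the norm:
   G(f)(g - f) <= |g| - |f|.  Second, the classical kernel lemma of linear
   algebra: a linear form vanishing on the common kernel of finitely many
   linear forms nu_j is a linear combination of them.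

   Since M_y is the translate fhat + (common kernel of the nu_j), fhat is a
   minimizer iff it minimizes the norm on every line fhat + R h with h in the
   kernel.  Such minimality forces G(fhat) h = 0, hence G(fhat) is in the
   span of the nu_j; conversely, if G(fhat) is in the span, it vanishes on
   f - fhat for f in M_y, and the subgradient inequality gives |fhat| <= |f|. *)

Section OneSidedBounds.
Context {R : realType} {g : R -> R} {x l : R}.
Hypothesis g_cvg : g @ x^' --> l.

Let g_cvg_right : g @ x^'+ --> l.
Proof.
apply: cvg_trans g_cvg; apply: cvg_app; apply: within_subset => t /= xt.
by rewrite gt_eqF.
Qed.

Let g_cvg_left : g @ x^'- --> l.
Proof.
apply: cvg_trans g_cvg; apply: cvg_app; apply: within_subset => t /= tx.
by rewrite lt_eqF.
Qed.

Lemma limit_ge_right c : (forall t, x < t -> c <= g t) -> c <= l.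
Proof.
move=> gec; apply: (cvgr_to_ge g_cvg_right).
by near=> t; apply: gec; near: t; exact: nbhs_right_gt.
Unshelve. all: by end_near.
Qed.

Lemma limit_le_left c : (forall t, t < x -> g t <= c) -> l <= c.
Proof.
move=> glc; apply: (cvgr_to_le g_cvg_left).
by near=> t; apply: glc; near: t; exact: nbhs_left_lt.
Unshelve. all: by end_near.
Qed.

End OneSidedBounds.

Section NormDifferenceQuotients.
Context {R : realType} {B : normedModType R} (f : B).

(* Convexity of the norm: every left difference quotient of t |-> |f + t h|
   at 0 is below every right one. *)
Lemma norm_dq_le h u s : u < 0 -> 0 < s -> norm_dq f h u <= norm_dq f h s.
Proof.
move=> u0 s0.
have convex : (s - u) * `|f| <= s * `|f + u *: h| - u * `|f + s *: h|.
  have -> : (s - u) * `|f| = `|(s - u) *: f|.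
    by rewrite normrZ ger0_norm // subr_ge0 ltW // (lt_trans u0).
  have -> : (s - u) *: f = s *: (f + u *: h) + (- u) *: (f + s *: h).
    rewrite !scalerDr !scalerA scaleNr scalerBl mulrC.
    by rewrite mulNr scaleNr addrACA subrr addr0.
  apply: le_trans (ler_normD _ _) _.
  by rewrite !normrZ gtr0_norm // gtr0_norm ?oppr_gt0 // mulNr.
rewrite /norm_dq ler_ndivrMr // mulrAC ler_pdivrMr //.
nra.
Qed.
End NormDifferenceQuotients.

Definition linear_form {R : pzRingType} {V : lmodType R} (g : V -> R) : Prop :=
  forall (a : R) (x y : V), g (a *: x + y) = a * g x + g y.

Section GateauxDerivative.
Context {R : realType} {B : normedModType R} {f : B}.
Hypothesis f_diff : gateaux_diff_at f.

Let D (h : B) : R := lim (norm_dq f h @ 0^').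
Let D_cvg (h : B) : norm_dq f h @ 0^' --> D h.
Proof. exact: f_diff. Qed.

Lemma gateaux_le_dq h s : 0 < s -> D h <= norm_dq f h s.
Proof.
move=> s0; apply: (limit_le_left (D_cvg h)) => u u0.
exact: norm_dq_le.
Qed.

Lemma dq_le_gateaux h u : u < 0 -> norm_dq f h u <= D h.
Proof.
move=> u0; apply: (limit_ge_right (D_cvg h)) => s s0.
exact: norm_dq_le.
Qed.

Let norm_dqN h t : norm_dq f (- h) t = - norm_dq f h (- t).
Proof. by rewrite /norm_dq scalerN -scaleNr invrN mulrN opprK. Qed.

Let norm_dqZ a h t : a != 0 -> norm_dq f (a *: h) t = a * norm_dq f h (a * t).
Proof.
move=> a0; rewrite /norm_dq scalerA (mulrC t a) invfM.
by rewrite mulrCA (mulrA a) mulfV // mul1r.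
Qed.

(* Reversing the direction reverses the quotients, so D is odd. *)
Lemma gateauxN h : D (- h) = - D h.
Proof.
apply/eqP; rewrite eq_le; apply/andP; split.
- rewrite lerNr; apply: (limit_le_left (D_cvg h)) => t t0.
  by rewrite lerNr -(opprK t) -norm_dqN gateaux_le_dq // oppr_gt0.
- rewrite lerNl; apply: (limit_ge_right (D_cvg h)) => t t0.
  by rewrite lerNl -(opprK t) -norm_dqN dq_le_gateaux // oppr_lt0.
Qed.

Lemma gateauxZ_pos a h : 0 < a -> D (a *: h) = a * D h.
Proof.
move=> a0; apply/eqP; rewrite eq_le; apply/andP; split.
- apply: (limit_le_left (D_cvg _)) => t t0; rewrite norm_dqZ ?gt_eqF //.
  by rewrite ler_pM2l // dq_le_gateaux // pmulr_rlt0.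
- apply: (limit_ge_right (D_cvg _)) => t t0; rewrite norm_dqZ ?gt_eqF //.
  by rewrite ler_pM2l // gateaux_le_dq // mulr_gt0.
Qed.

Lemma gateauxZ a h : D (a *: h) = a * D h.
Proof.
have D0 : D 0 = 0.
  by have := @gateauxZ_pos 2 0 (ltr0Sn _ 1); rewrite scaler0; lra.
case: (ltgtP a 0) => [a0|a0|->].
- by rewrite -(opprK a) scaleNr gateauxN gateauxZ_pos ?oppr_gt0 // !mulNr.
- exact: gateauxZ_pos.
- by rewrite scale0r mul0r D0.
Qed.

(* Convexity of the norm at the midpoint of f + 2t x and f + 2t y. *)
Let norm_dqD x y t :
  0 < t -> norm_dq f (x + y) t <= norm_dq f x (2 * t) + norm_dq f y (2 * t).
Proof.
move=> t0; rewrite /norm_dq invfM !mulrA -mulrDl ler_pM2r ?invr_gt0 //.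
suff : 2 * `|f + t *: (x + y)| <= `|f + (2 * t) *: x| + `|f + (2 * t) *: y|.
  by lra.
have -> : 2 * `|f + t *: (x + y)| = `|2 *: (f + t *: (x + y))|.
  by rewrite normrZ ger0_norm.
have -> : 2 *: (f + t *: (x + y)) = (f + (2 * t) *: x) + (f + (2 * t) *: y).
  rewrite -!scalerA -[2]/(1 + 1) !scalerDr !scalerDl !scale1r.
  by rewrite addrACA.
exact: ler_normD.
Qed.

(* D is subadditive by the previous inequality, hence additive since odd. *)
Lemma gateauxD x y : D (x + y) = D x + D y.
Proof.
have subadditive a b : D (a + b) <= D a + D b.
  have sum_cvg : (fun t => norm_dq f a t + norm_dq f b t) @ 0^' --> D a + D b.
    exact: cvgD.
  apply: (limit_ge_right sum_cvg) => s s0 /=.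
  have s2 : 0 < s / 2 by rewrite divr_gt0.
  apply: le_trans (gateaux_le_dq _ _ s2) _.
  by apply: le_trans (norm_dqD _ _ _ s2) _; rewrite mulrC -mulrA mulVf // mulr1.
apply/eqP; rewrite eq_le subadditive /=.
by have := subadditive (x + y) (- y); rewrite addrK gateauxN lerBrDr.
Qed.

Lemma gateaux_linear : linear_form D.
Proof. by move=> a x y; rewrite gateauxD gateauxZ. Qed.

End GateauxDerivative.

Section LinearForms.
Context {R : fieldType} {V : lmodType R}.
Implicit Types (g phi G : V -> R) (x h : V).

Lemma linear_form0 g : linear_form g -> g 0 = 0.
Proof.
move=> g_lin; have := g_lin 1 0 0.
by rewrite scale1r addr0 mul1r -{1}[g 0]addr0 => /addrI.
Qed.

Lemma linear_formD g x h : linear_form g -> g (x + h) = g x + g h.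
Proof. by move=> g_lin; rewrite -[x]scale1r g_lin mul1r scale1r. Qed.

Lemma linear_formZ g a x : linear_form g -> g (a *: x) = a * g x.
Proof. by move=> g_lin; rewrite -[a *: x]addr0 g_lin linear_form0 // addr0. Qed.

Definition common_kernel {n : nat} (N : 'I_n -> V -> R) : set V :=
  [set h | forall i, N i h = 0].

(* One step of the classical kernel lemma: if G vanishes on the common kernel
   of N and phi, then G agrees with a multiple of phi on the common kernel of N. *)
Lemma kernel_split n (N : 'I_n -> V -> R) phi G :
  (forall i, linear_form (N i)) -> linear_form phi -> linear_form G ->
  (forall h, common_kernel N h -> phi h = 0 -> G h = 0) ->
  exists c, forall h, common_kernel N h -> G h = c * phi h.
Proof.
move=> N_lin phi_lin G_lin G_ker.
case: (pselect (exists v, common_kernel N v /\ phi v != 0)) => [[v [Nv phiv]]|].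
- exists (G v / phi v) => h Nh; pose a := phi h / phi v.
  have Nh' : common_kernel N ((- a) *: v + h).
    by move=> i; rewrite N_lin Nv Nh mulr0 addr0.
  have := G_ker _ Nh'; rewrite phi_lin G_lin /a.
  rewrite mulNr divfK // addNr => /(_ erefl) /eqP.
  rewrite mulNr addrC subr_eq0 => /eqP ->.
  by rewrite mulrAC [RHS]mulrAC (mulrC (phi h)).
- move=> no_witness; exists 0 => h Nh; rewrite mul0r; apply: G_ker => //.
  by apply/eqP; apply: contra_notT no_witness => phih; exists h.
Qed.

Lemma linear_form_span n (N : 'I_n -> V -> R) G :
  (forall i, linear_form (N i)) -> linear_form G ->
  (forall h, common_kernel N h -> G h = 0) ->
  exists c : 'I_n -> R, forall h, G h = \sum_(i < n) c i * N i h.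
Proof.
elim: n N G => [|n IH] N G N_lin G_lin G_ker.
  by exists (fun=> 0) => h; rewrite big_ord0 G_ker // => -[].
pose N' i := N (lift ord_max i).
have kerS h : common_kernel N h <-> common_kernel N' h /\ N ord_max h = 0.
  split=> [Nh | [N'h Nmh] i]; first by split=> [i|]; apply: Nh.
  by case: (unliftP ord_max i) => [j ->|->]; first exact: N'h.
have [c0 Hc0] : exists c, forall h, common_kernel N' h -> G h = c * N ord_max h.
  apply: kernel_split => // [i|h N'h Nmh]; first exact: N_lin.
  by apply: G_ker; apply/kerS.
pose G' h := G h - c0 * N ord_max h.
have G'_lin : linear_form G'.
  by move=> a x h; rewrite /G' G_lin N_lin; ring.
have G'_ker h : common_kernel N' h -> G' h = 0.
  by move=> N'h; rewrite /G' Hc0 // subrr.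
have [c' Hc'] := IH N' G' (fun i => N_lin _) G'_lin G'_ker.
exists (fun i => if unlift ord_max i is Some j then c' j else c0) => h.
rewrite big_ord_recr /= unlift_none -[G h](subrK (c0 * N ord_max h)) -/(G' h) Hc'.
congr (_ + _); apply: eq_bigr => i _.
have -> : widen_ord (leqnSn n) i = lift ord_max i.
  by apply: val_inj; rewrite /= /bump leqNgt ltn_ord.
by rewrite liftK.
Qed.

End LinearForms.

Section SmoothNorm.
Context {R : realType} {B : normedModType R}.
Hypothesis B_smooth : smooth_space B.

Lemma gateaux_G_linear (f : B) : linear_form (gateaux_G f).
Proof.
rewrite /gateaux_G; case: eqP => [_ a x h|/eqP f0]; first by rewrite mulr0 addr0.
exact/gateaux_linear/B_smooth.
Qed.

Lemma gateaux_G_subgradient (f g : B) : gateaux_G f (g - f) <= `|g| - `|f|.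
Proof.
rewrite /gateaux_G; case: eqP => [->|/eqP f0]; first by rewrite normr0 subr0.
apply: le_trans (gateaux_le_dq (B_smooth f f0) (g - f) 1 ltr01) _.
by rewrite /norm_dq scale1r invr1 mulr1 (addrC f) subrK.
Qed.

Lemma gateaux_G_line_min (f h : B) :
  (forall t : R, `|f| <= `|f + t *: h|) -> gateaux_G f h = 0.
Proof.
move=> f_min; rewrite /gateaux_G; case: eqP => // /eqP f0.
have f_diff := B_smooth f f0.
apply/eqP; rewrite eq_le; apply/andP; split.
- apply: (limit_le_left (f_diff h)) => t t0.
  by apply: mulr_ge0_le0; rewrite ?subr_ge0 ?f_min // invr_le0 ltW.
- apply: (limit_ge_right (f_diff h)) => t t0.
  by apply: divr_ge0; rewrite ?subr_ge0 ?f_min // ltW.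
Qed.

End SmoothNorm.

Section InterpolationSet.
Context {R : realType} {B : normedModType R} {m : nat}.
Context {nu : 'I_m -> B -> R} {y : 'I_m -> R}.
Hypothesis nu_lin : forall j, linear_form (nu j).

Lemma M_y_shift (f h : B) (t : R) :
  M_y nu y f -> common_kernel nu h -> M_y nu y (f + t *: h).
Proof.
by move=> fM h_ker j; rewrite linear_formD // linear_formZ // h_ker mulr0 addr0.
Qed.

Lemma M_y_sub (f g : B) : M_y nu y f -> M_y nu y g -> common_kernel nu (g - f).
Proof.
move=> fM gM j; rewrite addrC -scaleN1r nu_lin fM gM.
by rewrite mulN1r addNr.
Qed.

Lemma mni_solutionP (fhat : B) :
  mni_solution nu y fhat <->
  M_y nu y fhat /\ forall f, M_y nu y f -> `|fhat| <= `|f|.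
Proof.
have norms_lb : has_lbound [set `|f| | f in M_y nu y].
  by exists 0 => _ [f _ <-].
split=> [[fhatM ->]|[fhatM fhat_min]]; split=> //.
  by move=> f fM; apply: ge_inf => //; exists f.
apply/eqP; rewrite eq_le; apply/andP; split.
  by apply: lb_le_inf => [|_ [f fM <-]]; [exists `|fhat|, fhat | exact: fhat_min].
by apply: ge_inf => //; exists fhat.
Qed.

End InterpolationSet.

Theorem mainTheorem3 (R : realType) (B : completeNormedModType R)
  (m : nat) (nu : 'I_m -> B -> R) (y : 'I_m -> R) (fhat : B) :
  smooth_space B ->
  (forall j, is_dual_elt (nu j)) ->
  lin_indep_fun nu ->
  mni_solution nu y fhat <->
  (M_y nu y fhat /\
   exists c : 'I_m -> R, forall h : B, gateaux_G fhat h = \sum_(j < m) c j * nu j h).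
Proof.
move=> B_smooth nu_dual _.
have nu_lin j : linear_form (nu j) by exact: (nu_dual j).1.
rewrite mni_solutionP; split=> [[fhatM fhat_min] | [fhatM [c G_span]]]; split=> //.
- apply: linear_form_span => // [|h h_ker]; first exact: gateaux_G_linear.
  apply: gateaux_G_line_min => // t.
  by apply: fhat_min; apply: M_y_shift.
- move=> f fM; rewrite -subr_ge0.
  apply: le_trans _ (gateaux_G_subgradient B_smooth fhat f).
  rewrite G_span big1 // => j _.
  by rewrite (M_y_sub nu_lin _ _ fhatM fM j) mulr0.
Qed.
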